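(* Let $P$ be a set of $n$ points in $\mathbb{R}^2$ in general position, and consider any convex hull peeling process on $P$, i.e. any sequence of steps each deleting one vertex of the convex hull of the current point set. Then the total number of times any point becomes active for any hull point (over the initial configuration and all steps of the process) is at most $3n$.
   Context: For the current point set $S$, $L^1$ is the set of vertices of $CH(S)$ and $L^2$ the set of vertices of $CH(S\setminus L^1)$. For consecutive points $(t,u,v)$ of $L^1$, a point $p$ is active for $u$ (equivalently, active in $u$'s triangle $\triangle(t,u,v)$) if, upon deleting $u$ from $S$ and recomputing the first and second convex layers, $p$ moves to the first layer. A point $p$ becomes active for $u$ at a given configuration if it is active for $u$ there but was not active for $u$ in the previous configuration (or if this is the initial configuration). *)

From HB Require Import structures.
From mathcomp Require Import all_boot all_order all_algebra.
From mathcomp Require Import reals.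
Set Implicit Arguments. Unset Strict Implicit. Unset Printing Implicit Defensive.
Import Order.TTheory GRing.Theory Num.Theory.
Local Open Scope ring_scope.

Section Hull.
Variable R : realType.
Notation pt := (R * R)%type.

Definition in_conv (S : seq pt) (p : pt) : Prop :=
  exists w : pt -> R,
    (forall q, q \in S -> 0 <= w q) /\
    \sum_(q <- S) w q = 1 /\
    p = (\sum_(q <- S) w q * q.1, \sum_(q <- S) w q * q.2).

Definition hull_vertex (S : seq pt) (p : pt) : Prop :=
  p \in S /\ ~ in_conv [seq q <- S | q != p] p.

Definition general_position (P : seq pt) : Prop :=
  forall a b c, a \in P -> b \in P -> c \in P ->
    a != b -> b != c -> a != c ->
    (b.1 - a.1) * (c.2 - a.2) - (b.2 - a.2) * (c.1 - a.1) != 0.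

Definition active (S : seq pt) (u p : pt) : Prop :=
  hull_vertex S u /\ p \in S /\ ~ hull_vertex S p /\ hull_vertex (rem u S) p.

Fixpoint peel_valid (S : seq pt) (us : seq pt) : Prop :=
  match us with
  | [::] => True
  | u :: us' => hull_vertex S u /\ peel_valid (rem u S) us'
  end.

Definition conf (P us : seq pt) (j : nat) : seq pt :=
  foldl (fun S u => rem u S) P (take j us).

Definition becomes_active (P us : seq pt) (j : nat) (u p : pt) : Prop :=
  (j <= size us)%N /\ active (conf P us j) u p /\
  (j = 0%N \/ ~ active (conf P us j.-1) u p).

End Hull.

(* Deleting points keeps hull vertices on the hull.  Hence once p is active
   for u it stays active for u as long as p is not itself on the hull (u cannot
   be deleted earlier, since that would put p on the hull), so every pair
   (u, p) becomes active at most once.  At any moment an interior point p is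
   active for at most three hull points: four points a, b, c, d of the plane
   carry an affine dependence (the signed 3x3 minors, nonzero by general
   position), and shifting the convex weights of p along it zeroes the weight
   of one of a, b, c, d while keeping p in the hull of the others, so deleting
   that point leaves p interior.  Summing over the n points gives 3n. *)

From mathcomp Require Import all_boot all_order all_algebra.
From mathcomp Require Import reals.
From mathcomp Require Import ring.
From Stdlib Require Import Classical_Prop.
Set Implicit Arguments. Unset Strict Implicit. Unset Printing Implicit Defensive.
Import Order.TTheory GRing.Theory Num.Theory.
Local Open Scope ring_scope.

Lemma seq_extremum (T : eqType) (ord : rel T) (s : seq T) x0 :
  total ord -> transitive ord -> x0 \in s ->
  exists2 k, k \in s & forall q, q \in s -> ord k q.
Proof.
move=> tot tr; elim: s x0 => // a s IH x0 _.
have refl x : ord x x by case/orP: (tot x x).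
case: s IH => [|b s] IH.
  by exists a; rewrite ?mem_head // => q; rewrite inE => /eqP ->.
have [k ks kmin] := IH b (mem_head _ _).
case/orP: (tot a k) => [ak | ka].
  exists a; first exact: mem_head.
  by move=> q; rewrite inE => /predU1P [-> // | /kmin]; apply: tr.
exists k; first by rewrite inE ks orbT.
by move=> q; rewrite inE => /predU1P [-> | /kmin].
Qed.

Lemma size_le_mul_fibers (T U : eqType) (f : T -> U) (s : seq T) (D : seq U) m :
  (forall x, x \in s -> f x \in D) ->
  (forall y, (count (fun x => f x == y) s <= m)%N) ->
  (size s <= m * size D)%N.
Proof.
elim: D s => [|y D IH] s sD fib.
  by case: s sD {fib} => // x s /(_ x (mem_head _ _)).
rewrite -(count_predC (fun x => f x == y)) /= mulnS leq_add //.
rewrite -size_filter; apply: IH => [x | z].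
  by rewrite mem_filter => /andP [/= fxy /sD]; rewrite inE (negbTE fxy).
by rewrite count_filter; apply: leq_trans (fib z); apply: sub_count => x /andP [].
Qed.

Section Hull.
Variable R : realType.
Notation pt := (R * R)%type.
Implicit Types (S T : seq pt) (p q u x : pt).

Definition cross (a b c : pt) : R :=
  (b.1 - a.1) * (c.2 - a.2) - (b.2 - a.2) * (c.1 - a.1).

Definition affine_dependence T (lam : pt -> R) : Prop :=
  [/\ \sum_(q <- T) lam q = 0, \sum_(q <- T) lam q * q.1 = 0
    & \sum_(q <- T) lam q * q.2 = 0].

Definition interior S p : Prop := p \in S /\ ~ hull_vertex S p.

Lemma general_position_sub S T :
  {subset S <= T} -> general_position T -> general_position S.
Proof. by move=> ST gpT a b c /ST aT /ST bT /ST cT; apply: gpT. Qed.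

Lemma filterC (a b : pred pt) T : filter a (filter b T) = filter b (filter a T).
Proof. by rewrite -!filter_predI; apply: eq_filter => q /=; rewrite andbC. Qed.

Lemma remC S x y : uniq S -> rem x (rem y S) = rem y (rem x S).
Proof.
move=> uS; rewrite (rem_filter x (rem_uniq y uS)) (rem_filter y (rem_uniq x uS)).
by rewrite !rem_filter // filterC.
Qed.

Lemma mem_remP S x p : uniq S -> p \in rem x S -> p != x /\ p \in S.
Proof. by move=> uS; rewrite rem_filter // mem_filter => /andP []. Qed.

Lemma in_conv_filter (a : pred pt) T p : in_conv (filter a T) p -> in_conv T p.
Proof.
case=> w [w0 [w1 wp]].
exists (fun q => if a q then w q else 0); split; [|split].
- by move=> q qT; case: ifP => aq //; apply: w0; rewrite mem_filter aq.
- by rewrite -big_mkcond -big_filter.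
- rewrite wp !big_filter !(big_mkcond a); congr (_, _); apply: eq_bigr => q _.
  all: by case: (a q); rewrite ?mul0r.
Qed.

Lemma in_conv_drop T p x (w : pt -> R) :
  (forall q, q \in T -> 0 <= w q) -> \sum_(q <- T) w q = 1 ->
  p = (\sum_(q <- T) w q * q.1, \sum_(q <- T) w q * q.2) -> w x = 0 ->
  in_conv [seq q <- T | q != x] p.
Proof.
move=> w0 w1 wp wx; exists w; split; [|split].
- by move=> q; rewrite mem_filter => /andP [_ /w0].
- rewrite big_filter big_mkcond -w1; apply: eq_bigr => q _.
  by case: eqP => // ->.
- rewrite {1}wp !big_filter !big_mkcond; congr (_, _); rewrite [RHS]big_mkcond.
  all: by apply: eq_bigr => q _; case: eqP => // ->; rewrite wx mul0r.
Qed.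

Lemma in_conv_eliminate T p (lam : pt -> R) q0 :
  in_conv T p -> affine_dependence T lam -> q0 \in T -> 0 < lam q0 ->
  exists2 k, 0 < lam k & in_conv [seq q <- T | q != k] p.
Proof.
case=> w [w0 [w1 wp]] [lam1 lamx lamy] q0T lamq0.
pose ord := [rel q q' | w q / lam q <= w q' / lam q'].
have ord_total : total ord by move=> q q'; apply: le_total.
have ord_trans : transitive ord by move=> q' q q''; apply: le_trans.
have q0pos : q0 \in [seq q <- T | 0 < lam q] by rewrite mem_filter lamq0.
have [k] := seq_extremum ord_total ord_trans q0pos.
rewrite mem_filter => /andP [lamk kT] kmin.
(* [t] is the largest step along [- lam] keeping all weights nonnegative. *)
pose t := w k / lam k.
have shift F : \sum_(q <- T) lam q * F q = 0 ->
    \sum_(q <- T) (w q - t * lam q) * F q = \sum_(q <- T) w q * F q.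
  move=> lamF; under eq_bigr do rewrite mulrBl -mulrA.
  by rewrite sumrB -mulr_sumr lamF mulr0 subr0.
exists k => //; apply: (@in_conv_drop _ _ _ (fun q => w q - t * lam q)).
- move=> q qT; have [lamq | lamq] := ltP 0 (lam q).
    by rewrite subr_ge0 -ler_pdivlMr //; apply: kmin; rewrite mem_filter lamq.
  have t0 : 0 <= t by rewrite divr_ge0 ?w0 ?ltW.
  by rewrite subr_ge0 (le_trans (mulr_ge0_le0 t0 lamq)) ?w0.
- by rewrite sumrB -mulr_sumr lam1 mulr0 subr0.
- by rewrite !shift.
- by rewrite /t divfK ?subrr ?gt_eqF.
Qed.

Lemma affine_dependenceN T lam :
  affine_dependence T lam -> affine_dependence T (fun q => - lam q).
Proof.
case=> s0 s1 s2; split; first by rewrite sumrN s0 oppr0.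
all: by under eq_bigr do rewrite mulNr; rewrite sumrN ?s1 ?s2 oppr0.
Qed.

(* Cramer's rule: the signed minors of the other three points give an affine
   dependence of a, b, c, d. *)
Definition cofactor_weights (a b c d : pt) (q : pt) : R :=
  (q == a)%:R * cross b c d - (q == b)%:R * cross a c d
  + (q == c)%:R * cross a b d - (q == d)%:R * cross a b c.

Lemma sum_indicator T x (F : pt -> R) :
  uniq T -> x \in T -> \sum_(q <- T) (q == x)%:R * F q = F x.
Proof.
move=> uT xT; rewrite (bigD1_seq x) //= eqxx mul1r big1 ?addr0 //.
by move=> q /negbTE ->; rewrite mul0r.
Qed.

Lemma cofactor_affine_dependence T a b c d :
  uniq T -> {subset [:: a; b; c; d] <= T} ->
  affine_dependence T (cofactor_weights a b c d).
Proof.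
move=> uT abcdT.
have expand F : \sum_(q <- T) cofactor_weights a b c d q * F q =
    cross b c d * F a - cross a c d * F b + cross a b d * F c - cross a b c * F d.
  under eq_bigr do rewrite /cofactor_weights !mulrDl !mulNr -!mulrA.
  by rewrite !big_split !sumrN /= !sum_indicator //; apply: abcdT;
    rewrite !inE eqxx ?orbT.
split; last 2 first.
- by rewrite expand /cross; ring.
- by rewrite expand /cross; ring.
under eq_bigr do rewrite -[cofactor_weights _ _ _ _ _]mulr1.
by rewrite expand /cross; ring.
Qed.

Lemma in_conv_drop_one_of_four T p a b c d :
  uniq T -> in_conv T p -> {subset [:: a; b; c; d] <= T} ->
  d \notin [:: a; b; c] -> cross a b c != 0 ->
  exists2 k, k \in [:: a; b; c; d] & in_conv [seq q <- T | q != k] p.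
Proof.
move=> uT pT abcdT dabc abc.
pose lam := cofactor_weights a b c d.
have dep := cofactor_affine_dependence uT abcdT.
have dT : d \in T by apply: abcdT; rewrite !inE eqxx !orbT.
have lamd : lam d = - cross a b c.
  rewrite /lam /cofactor_weights eqxx.
  move: dabc; rewrite !inE !negb_or => /and3P [/negbTE -> /negbTE -> /negbTE ->].
  by rewrite !mul0r mul1r !subr0 addr0 sub0r.
have supp k : lam k != 0 -> k \in [:: a; b; c; d].
  apply: contraR; rewrite !inE !negb_or => /and4P [ka kb kc kd].
  rewrite /lam /cofactor_weights (negbTE ka) (negbTE kb) (negbTE kc) (negbTE kd).
  by rewrite !mul0r !subr0 addr0.
have [lam' [dep' lam'd supp']] : exists lam' : pt -> R, [/\ affine_dependence T lam',
    0 < lam' d & forall k, 0 < lam' k -> k \in [:: a; b; c; d]].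
  case: (ltrgtP (lam d) 0) => [neg | pos | zero].
  - exists (fun q => - lam q); split.
    + exact: affine_dependenceN.
    + by rewrite oppr_gt0.
    + by move=> k /lt0r_neq0; rewrite oppr_eq0; apply: supp.
  - by exists lam; split=> // k /lt0r_neq0 /supp.
  - by move: abc; rewrite -oppr_eq0 -lamd zero eqxx.
by have [k /supp' kin kT] := in_conv_eliminate pT dep' dT lam'd; exists k.
Qed.

Lemma hull_vertex_rem S x p :
  uniq S -> x != p -> hull_vertex S p -> hull_vertex (rem x S) p.
Proof.
move=> uS xp [pS nc]; split; first by rewrite rem_filter // mem_filter /= eq_sym xp.
by rewrite rem_filter // filterC => /in_conv_filter.
Qed.

Lemma interior_rem S x p : uniq S -> interior (rem x S) p -> interior S p.
Proof.
move=> uS [/(mem_remP uS) [px pS] nh]; split=> // h; apply: nh.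
by apply: hull_vertex_rem; rewrite // eq_sym.
Qed.

Lemma active_interior S u p : active S u p -> interior S p.
Proof. by move=> [_ [pS [nh _]]]. Qed.

Lemma active_rem S x u p :
  uniq S -> active S u p -> interior (rem x S) p -> active (rem x S) u p.
Proof.
move=> uS [hu [_ [_ hp]]] [pxS nh]; have [px _] := mem_remP uS pxS.
have xu : x != u by apply/eqP => xu; apply: nh; rewrite xu.
split; first exact: hull_vertex_rem.
do 2!split=> //.
by rewrite remC //; apply: hull_vertex_rem; rewrite ?rem_uniq // eq_sym.
Qed.

Lemma size_active_le3 S p (U : seq pt) :
  uniq S -> general_position S -> uniq U ->
  (forall u, u \in U -> active S u p) -> (size U <= 3)%N.
Proof.
move=> uS gpS uU actU.
case: U uU actU => [|a [|b [|c [|d U]]]] // uU actU; exfalso.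
have [pS nhp] := active_interior (actU a (mem_head _ _)).
have pT : in_conv [seq q <- S | q != p] p.
  by apply: NNPP => h; apply: nhp.
have inT u : u \in [:: a, b, c, d & U] -> u \in [seq q <- S | q != p].
  move=> /actU [hu _]; rewrite mem_filter hu.1 andbT.
  by apply/eqP => up; apply: nhp; rewrite -up.
have abcdT : {subset [:: a; b; c; d] <= [seq q <- S | q != p]}.
  by move=> u u4; apply: inT; rewrite -[a :: _]/([:: a; b; c; d] ++ U) mem_cat u4.
have abcdS u : u \in [:: a; b; c; d] -> u \in S.
  by move/abcdT; rewrite mem_filter => /andP [].
move: uU; rewrite /= !inE !negb_or.
move=> /andP [/and4P [ab ac ad _] /andP [/and3P [bc bd _] /andP [/andP [cd _] _]]].
have abc : cross a b c != 0.
  by apply: gpS => //; apply: abcdS; rewrite !inE eqxx ?orbT.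
have dabc : d \notin [:: a; b; c].
  by rewrite !inE !negb_or (eq_sym d a) (eq_sym d b) (eq_sym d c) ad bd cd.
have [k kin kT] := in_conv_drop_one_of_four (filter_uniq _ uS) pT abcdT dabc abc.
have [_ [_ [_ [_ hk]]]] : active S k p.
  by apply: actU; rewrite -[a :: _]/([:: a; b; c; d] ++ U) mem_cat kin.
by apply: hk; rewrite rem_filter // filterC.
Qed.

End Hull.

Section Peeling.
Variables (R : realType) (P us : seq (R * R)).
Hypothesis uP : uniq P.
Local Notation S k := (conf P us k).

Lemma conf_succ k x0 : (k < size us)%N -> S k.+1 = rem (nth x0 us k) (S k).
Proof. by move=> lt; rewrite /conf (take_nth x0) // foldl_rcons. Qed.

Lemma conf_sub k : {subset S k <= P}.
Proof. by rewrite /conf; elim: (take k us) P => [|u l IH] Q x //= /IH /mem_rem. Qed.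

Lemma conf_uniq k : uniq (S k).
Proof.
by rewrite /conf; elim: (take k us) P uP => [|u l IH] Q uQ //=; rewrite IH ?rem_uniq.
Qed.

Lemma interior_conf_le j k p :
  (j <= k <= size us)%N -> interior (S k) p -> interior (S j) p.
Proof.
elim: k => [|k IH] /andP [jk ks]; first by move: jk; rewrite leqn0 => /eqP ->.
move: jk; rewrite leq_eqVlt => /orP [/eqP -> // | jk].
rewrite (conf_succ p ks) => /(interior_rem (conf_uniq k)).
by apply: IH; rewrite -ltnS jk ltnW.
Qed.

Lemma active_conf_le j k u p :
  (j <= k <= size us)%N -> active (S j) u p -> interior (S k) p -> active (S k) u p.
Proof.
elim: k => [|k IH] /andP [jk ks] A; first by move: jk A; rewrite leqn0 => /eqP ->.
move: jk; rewrite leq_eqVlt => /orP [/eqP <- // | jk] int.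
have jk' : (j <= k <= size us)%N by rewrite -ltnS jk ltnW.
have intk : interior (S k) p.
  by apply: interior_conf_le int; rewrite leqnSn.
move: int; rewrite (conf_succ p ks) => int.
exact: active_rem (conf_uniq k) (IH jk' A intk) int.
Qed.

Lemma becomes_active_unique j j' u p :
  becomes_active P us j u p -> becomes_active P us j' u p -> j = j'.
Proof.
wlog jj' : j j' / (j < j')%N.
  move=> wlog B B'; case: (ltngtP j j') => [lt | lt | //].
  - exact: wlog B B'.
  - by apply/esym; apply: wlog B' B.
move=> [_ [A _]] [j's [A' [j0 | nA]]]; first by move: jj'; rewrite j0.
exfalso; apply: nA; apply: (active_conf_le _ A).
- by rewrite -ltnS prednK ?jj' ?(leq_trans (leq_pred j')) // (leq_ltn_trans _ jj').
- by apply: interior_conf_le (active_interior A'); rewrite j's andbT leq_pred.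
Qed.

Lemma count_becomes_active_le3 (ev : seq (nat * (R * R) * (R * R))) p :
  general_position P -> uniq ev ->
  (forall e, e \in ev -> becomes_active P us e.1.1 e.1.2 e.2) ->
  (count (fun e => e.2 == p) ev <= 3)%N.
Proof.
move=> gp uev evP; rewrite -size_filter; set F := filter _ ev.
have FP e : e \in F -> e.2 = p /\ becomes_active P us e.1.1 e.1.2 p.
  by rewrite mem_filter => /andP [/eqP <- /evP].
case: (boolP (has predT F)) => [/hasP [e0 e0F _] |]; last first.
  by rewrite has_predT lt0n negbK => /eqP ->.
pose later := [rel e e' : nat * (R * R) * (R * R) | e'.1.1 <= e.1.1]%N.
have later_total : total later by move=> e e'; apply: leq_total.
have later_trans : transitive later.
  by move=> e' e e'' /= h1 h2; apply: leq_trans h2 h1.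
have [f fF fmax] := seq_extremum later_total later_trans e0F.
have [fs [Af _]] := (FP f fF).2.
rewrite -(size_map (fun e => e.1.2)).
apply: (size_active_le3 (S := S f.1.1) (p := p)) (conf_uniq _) _ _ _.
- exact: general_position_sub (@conf_sub _) gp.
- rewrite map_inj_in_uniq ?filter_uniq // => -[[j u] q] [[j' u'] q'] eF e'F /= uu'.
  have [/= qp B] := FP _ eF; have [/= q'p B'] := FP _ e'F.
  move: B'; rewrite -uu' => B'.
  by rewrite (becomes_active_unique B B') qp q'p.
- move=> u /mapP [e eF ->]; have [_ [_ [A _]]] := FP e eF.
  apply: active_conf_le A (active_interior Af).
  by rewrite fs andbT; apply: fmax.
Qed.

End Peeling.

Theorem theorem2 (R : realType) (P us : seq (R * R)) :
  uniq P -> general_position P -> peel_valid P us ->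
  forall ev : seq (nat * (R * R) * (R * R)),
    uniq ev ->
    (forall e, e \in ev -> becomes_active P us e.1.1 e.1.2 e.2) ->
    (size ev <= 3 * size P)%N.
Proof.
move=> uP gp _ ev uev evP.
apply: (size_le_mul_fibers (f := snd)) => [e /evP [_ [[_ [pS _]] _]] | p].
  by move: pS; apply: conf_sub.
exact (count_becomes_active_le3 uP p gp uev evP).
Qed.
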